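(* Let $X$ be a space with $|X|<\mathfrak{d}$ and let $\mathcal{K}$ be a family of subsets of $X$ that is closed under finite unions. Then: (1) if $X$ is Star-$\sigma\mathcal{K}$, then $X$ satisfies $SS^*_{\mathcal{K}}(\mathcal{O},\mathcal{O})$; (2) if $X$ is absolutely Star-$\sigma\mathcal{K}$, then $X$ satisfies $selSS^*_{\mathcal{K}}(\mathcal{O},\mathcal{O})$.
   Context: All spaces are regular. For $A\subseteq X$ and a family $\mathcal{U}$ of subsets of $X$, $St(A,\mathcal{U})=\bigcup\{U\in\mathcal{U}:U\cap A\neq\emptyset\}$. $\mathfrak{d}$ is the least cardinality of a family $F\subseteq\omega^\omega$ such that every $g\in\omega^\omega$ satisfies $g\le^* f$ for some $f\in F$ ($\le^*$ = eventual domination). $X$ is Star-$\sigma\mathcal{K}$ if for every open cover $\mathcal{U}$ of $X$ there is $K\subseteq X$ which is a countable union of members of $\mathcal{K}$ with $St(K,\mathcal{U})=X$. $X$ is absolutely Star-$\sigma\mathcal{K}$ if for every dense $D\subseteq X$ and every open cover $\mathcal{U}$ there is $K\subseteq D$ which is a countable union of members of $\mathcal{K}$ (each contained in $D$) with $St(K,\mathcal{U})=X$. $SS^*_{\mathcal{K}}(\mathcal{O},\mathcal{O})$: for every sequence $(\mathcal{U}_n:n\in\omega)$ of open covers of $X$ there are $K_n\in\mathcal{K}$ ($n\in\omega$) such that $\{St(K_n,\mathcal{U}_n):n\in\omega\}$ covers $X$. $selSS^*_{\mathcal{K}}(\mathcal{O},\mathcal{O})$: for every sequence $(\mathcal{U}_n:n\in\omega)$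 of open covers and every sequence $(D_n:n\in\omega)$ of dense subsets of $X$ there are $K_n\in\mathcal{K}$ with $K_n\subseteq D_n$ such that $\{St(K_n,\mathcal{U}_n):n\in\omega\}$ covers $X$. *)

From mathcomp Require Import all_boot all_order.
From mathcomp Require Import all_classical all_reals all_analysis.
Set Implicit Arguments. Unset Strict Implicit. Unset Printing Implicit Defensive.
Local Open Scope classical_set_scope.

Definition eventually_le (f g : nat -> nat) : Prop :=
  exists N, forall n, (N <= n)%N -> (f n <= g n)%N.

Definition dominating (F : set (nat -> nat)) : Prop :=
  forall g, exists2 f, F f & eventually_le g f.

(* |A| < d : no dominating family has cardinality <= |A| (d is the least
   cardinality of a dominating family). *)
Definition card_lt_dfrak (T : Type) (A : set T) : Prop :=
  forall F : set (nat -> nat), dominating F -> ~ (F #<= A)%card.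

Section Star.
Context {X : topologicalType}.

Definition St (A : set X) (U : set (set X)) : set X :=
  \bigcup_(V in [set V | U V /\ V `&` A !=set0]) V.

Definition open_cover (U : set (set X)) : Prop :=
  (forall V, U V -> open V) /\ \bigcup_(V in U) V = setT.

Definition finite_union_closed (K : set (set X)) : Prop :=
  forall A B, K A -> K B -> K (A `|` B).

(* Star-sigma-K: the countable union is given as a sequence of members of K *)
Definition star_sigma (K : set (set X)) : Prop :=
  forall U, open_cover U ->
    exists Kn : nat -> set X, (forall n, K (Kn n)) /\
      St (\bigcup_n Kn n) U = setT.

Definition abs_star_sigma (K : set (set X)) : Prop :=
  forall (D : set X) U, dense D -> open_cover U ->
    exists Kn : nat -> set X, (forall n, K (Kn n) /\ Kn n `<=` D) /\
      St (\bigcup_n Kn n) U = setT.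

Definition SS_star (K : set (set X)) : Prop :=
  forall U : nat -> set (set X), (forall n, open_cover (U n)) ->
    exists Kn : nat -> set X, (forall n, K (Kn n)) /\
      \bigcup_n St (Kn n) (U n) = setT.

Definition selSS_star (K : set (set X)) : Prop :=
  forall (U : nat -> set (set X)) (D : nat -> set X),
    (forall n, open_cover (U n)) -> (forall n, dense (D n)) ->
    exists Kn : nat -> set X, (forall n, K (Kn n) /\ Kn n `<=` D n) /\
      \bigcup_n St (Kn n) (U n) = setT.
End Star.

From mathcomp Require Import all_boot all_order.
From mathcomp Require Import all_classical all_reals all_analysis.
Set Implicit Arguments. Unset Strict Implicit.
Local Open Scope classical_set_scope.

(* Idea of the proof (both parts are the same diagonal argument).
   Given open covers U_n, the hypothesis yields for every n a sequence
   (A n m)_m of members of K with St(U_m A n m, U_n) = X.  For each point x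
   choose f_x : omega -> omega such that x lies in St(A n (f_x n), U_n) for
   all n.  The family {f_x : x in X} has size at most |X| < d, so it is not
   dominating: some g is eventually dominated by no f_x, i.e. for every x
   there is n with f_x n < g n.  Then the finite unions
   K_n = A n 0 u ... u A n (g n) belong to K (closure under finite unions),
   stay inside the dense set D_n in the selective version, and
   x in St(A n (f_x n), U_n) <= St(K_n, U_n), so the stars St(K_n, U_n)
   cover X. *)

Fixpoint partial_union {T : Type} (A : nat -> set T) (k : nat) : set T :=
  if k is k'.+1 then partial_union A k' `|` A k'.+1 else A 0%N.

Lemma partial_union_sub {T : Type} (A : nat -> set T) (i k : nat) :
  (i <= k)%N -> A i `<=` partial_union A k.
Proof.
elim: k => [|k IH] /=; first by rewrite leqn0 => /eqP ->.
rewrite leq_eqVlt => /orP [/eqP -> | /IH iA x Ax]; first by move=> x; right.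
by left; exact: iA.
Qed.

Lemma partial_union_subset {T : Type} (A : nat -> set T) (D : set T) (k : nat) :
  (forall i, A i `<=` D) -> partial_union A k `<=` D.
Proof.
move=> AD; elim: k => [|k IH] /= x; first exact: AD.
by case; [exact: IH | exact: AD].
Qed.

Lemma partial_union_closed (X : topologicalType) (K : set (set X))
    (A : nat -> set X) (k : nat) :
  finite_union_closed K -> (forall i, K (A i)) -> K (partial_union A k).
Proof. by move=> fuK AK; elim: k => [|k IH] //=; exact: fuK. Qed.

Lemma St_monotone (X : topologicalType) (A B : set X) (U : set (set X)) :
  A `<=` B -> St A U `<=` St B U.
Proof.
move=> AB x [V [UV [y [Vy Ay]]] Vx].
by exists V => //; split => //; exists y; split => //; exact: AB.
Qed.

Lemma St_bigcup (X : topologicalType) (A : nat -> set X) (U : set (set X))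
    (x : X) :
  St (\bigcup_m A m) U x -> exists m, St (A m) U x.
Proof.
move=> [V [UV [y [Vy [m _ Amy]]]] Vx].
by exists m; exists V => //; split => //; exists y.
Qed.

Lemma not_dominating_image (T : Type) (f : T -> nat -> nat) :
  card_lt_dfrak [set: T] ->
  exists g : nat -> nat, forall x, ~ eventually_le g (f x).
Proof.
move=> ltd; apply: contrapT => noWitness.
apply: (ltd (f @` setT)); last exact: card_image_le.
move=> g; apply: contrapT => notDom; apply: noWitness.
by exists g => x gfx; apply: notDom; exists (f x) => //; exists x.
Qed.

Lemma not_eventually_le (g h : nat -> nat) :
  ~ eventually_le g h -> exists n, (h n < g n)%N.
Proof.
move=> notLe; apply: contrapT => noN; apply: notLe; exists 0%N => n _.
by rewrite leqNgt; apply/negP => hg; apply: noN; exists n.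
Qed.

Lemma diagonal_star_cover (X : topologicalType) (U : nat -> set (set X))
    (A : nat -> nat -> set X) :
  card_lt_dfrak [set: X] ->
  (forall n, St (\bigcup_m A n m) (U n) = setT) ->
  exists g : nat -> nat, \bigcup_n St (partial_union (A n) (g n)) (U n) = setT.
Proof.
move=> ltd starCover.
have witness (x : X) : exists f : nat -> nat, forall n, St (A n (f n)) (U n) x.
  have inSome (n : nat) : exists m, St (A n m) (U n) x.
    by apply: St_bigcup; rewrite starCover.
  by have [f fx] := choice inSome; exists f.
have [f fx] := choice witness.
have [g gNotDom] := not_dominating_image f ltd.
exists g; apply/seteqP; split => // x _.
have [n ltfg] := not_eventually_le (gNotDom x).
exists n => //; apply: St_monotone (fx x n).
exact/partial_union_sub/ltnW.
Qed.

Theorem mainTheorem1 (X : topologicalType) (K : set (set X)) :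
  regular_space X ->
  card_lt_dfrak [set: X] ->
  finite_union_closed K ->
  (star_sigma K -> SS_star K) /\ (abs_star_sigma K -> selSS_star K).
Proof.
move=> _ ltd fuK; split.
- move=> starK U coverU.
  have [A HA] := choice (fun n => starK (U n) (coverU n)).
  have [g gCover] := diagonal_star_cover ltd (fun n => (HA n).2).
  exists (fun n => partial_union (A n) (g n)); split => // n.
  exact: partial_union_closed (HA n).1.
- move=> starK U D coverU denseD.
  have [A HA] := choice (fun n => starK (D n) (U n) (denseD n) (coverU n)).
  have [g gCover] := diagonal_star_cover ltd (fun n => (HA n).2).
  exists (fun n => partial_union (A n) (g n)); split => // n; split.
  + by apply: partial_union_closed => // i; exact: ((HA n).1 i).1.
  + by apply: partial_union_subset => i; exact: ((HA n).1 i).2.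
Qed.
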